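(* Let $Q\in\mathbb{Z}[x_1,\dots,x_n]$ be a positive definite form of degree $k\ge2$ with Birch rank $\mathcal{B}(Q)>(k-1)2^k$, and let $\mathfrak{p}$ be a prime. For each $J\in\mathbb{N}$ there is $R_0(J)>0$ such that for every $\mathbf{b}\in(\mathbb{Z}/\mathfrak{p}^J\mathbb{Z})^n$ and every $R>R_0(J)$ there exists an integer $\lambda=\lambda(\mathbf{b})\in[R,2R)$ with \[ \#\{x\in\mathbb{Z}^n:\ Q(x)=\lambda,\ x\equiv\mathbf{b}\ (\mathrm{mod}\ \mathfrak{p}^J)\}\ \gtrsim\ \mathfrak{p}^{-J(n-1)}\lambda^{n/k-1}, \] where the implied constant depends only on $Q$ (not on $J$, $\mathbf{b}$, $R$).
   Context: The Birch rank $\mathcal{B}(Q)$ is the codimension in $\mathbb{C}^n$ of $\{z\in\mathbb{C}^n:\nabla Q(z)=0\}$. *)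

From HB Require Import structures.
From mathcomp Require Import all_boot all_order all_algebra all_field.
From Stdlib Require Import Reals ZArith List.
Set Implicit Arguments. Unset Strict Implicit. Unset Printing Implicit Defensive.

(* A polynomial in n variables with coefficients in B is represented as a finite
   list of monomials (coefficient, exponent vector); it denotes the sum of the
   monomials.  [meval] evaluates it in any "ring-like" carrier A given its
   operations. *)
Definition mpoly (n : nat) (B : Type) := list (B * ('I_n -> nat))%type.

Definition meval {n : nat} {A B : Type} (add mul : A -> A -> A) (zero one : A)
  (pw : A -> nat -> A) (c : B -> A) (f : mpoly n B) (x : 'I_n -> A) : A :=
  \big[add/zero]_(m <- f) mul (c m.1) (\big[mul/one]_(i < n) pw (x i) (m.2 i)).

Definition evalZ {n} (Q : mpoly n Z) (x : 'I_n -> Z) : Z :=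
  meval Z.add Z.mul 0%Z 1%Z (fun a e => Z.pow a (Z.of_nat e)) (fun z : Z => z) Q x.

Definition evalR {n} (Q : mpoly n Z) (x : 'I_n -> R) : R :=
  meval Rplus Rmult R0 R1 pow IZR Q x.

Section AlgC.
Local Open Scope ring_scope.
Definition ZtoC (z : Z) : algC := (Z.to_nat z)%:R - (Z.to_nat (Z.opp z))%:R.

Definition evalC {n} {B} (c : B -> algC) (f : mpoly n B) (x : 'I_n -> algC) : algC :=
  meval (@GRing.add algC) (@GRing.mul algC) 0 1 (@GRing.exp algC) c f x.
Definition czero : algC := 0.
End AlgC.

Definition is_form {n} (k : nat) (Q : mpoly n Z) : bool :=
  all (fun m => eqn (\big[addn/0%nat]_(i < n) m.2 i) k) Q.

Definition pos_def {n} (Q : mpoly n Z) : Prop :=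
  forall x : 'I_n -> R, (exists i, x i <> R0) -> Rlt R0 (evalR Q x).

Definition dpoly {n} (i : 'I_n) (Q : mpoly n Z) : mpoly n Z :=
  map (fun m => (Z.mul m.1 (Z.of_nat (m.2 i)),
                 fun j => if j == i then (m.2 j).-1 else m.2 j)) Q.

Definition cset (n : nat) := ('I_n -> algC) -> Prop.

Definition sing_locus {n} (Q : mpoly n Z) : cset n :=
  fun z => forall i : 'I_n, evalC ZtoC (dpoly i Q) z = czero.

Definition zclosed {n} (V : cset n) : Prop :=
  exists F : mpoly n algC -> Prop,
    forall z, V z <-> (forall f, F f -> evalC (fun c : algC => c) f z = czero).

Definition csubset {n} (U V : cset n) : Prop := forall z, U z -> V z.

Definition irreducible_closed {n} (V : cset n) : Prop :=
  zclosed V /\ (exists z, V z) /\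
  forall U W : cset n, zclosed U -> zclosed W ->
    (forall z, V z <-> (U z \/ W z)) -> csubset V U \/ csubset V W.

Definition irr_chain {n} (V : cset n) (d : nat) : Prop :=
  exists Zs : nat -> cset n,
    (forall i, leq i d -> irreducible_closed (Zs i) /\ csubset (Zs i) V) /\
    (forall i, leq i.+1 d -> csubset (Zs i) (Zs i.+1) /\
                            exists z, Zs i.+1 z /\ ~ Zs i z).

Definition zdim {n} (V : cset n) (d : nat) : Prop :=
  irr_chain V d /\ forall d', irr_chain V d' -> leq d' d.

Definition birch_rank {n} (Q : mpoly n Z) (r : nat) : Prop :=
  exists d, zdim (sing_locus Q) d /\ r = subn n d.

From mathcomp Require Import all_boot all_order all_algebra all_field.
From Stdlib Require Import Reals ZArith List.
From Stdlib Require Import Lra Lia Psatz.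
From mathcomp Require Import zify.
Set Implicit Arguments. Unset Strict Implicit.
Local Open Scope R_scope.

(* Let Q be an integral form of degree k in n > k variables, positive definite,
   so that c = Q(e_i0) > 0, and let q = p^J.  For R large put
   T = (3R/(2c))^(1/k), so that Q(T e_i0) = 3R/2.  A box of side W = qL,
   W <= T/blowup, around T e_i0 contains L^n, i.e. about (T/q)^n, integer points
   congruent to b modulo q (residue_box); by homogeneity and an explicit
   continuity bound for forms (evalR_perturb) Q takes values in [9R/8, 15R/8]
   on them (box_values).  These values are all congruent to Q(b) modulo q
   (evalZ_cong), so they meet at most 4R/q levels, and the pigeonhole principle
   (residue_pigeonhole, popular_level) gives a level lam in [R, 2R) carrying
   >> T^n q^(1-n) / R, i.e. >> p^(-J(n-1)) R^(n/k-1), of them (local_count).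
   Of the Birch rank hypothesis this elementary count only needs its
   consequence n > k (birch_rank_bound). *)

(* Iterating this controls perturbed monomials. *)
Lemma mul_perturb (a1 b1 a2 b2 s1 t1 s2 t2 : R) :
  Rabs b1 <= s1 -> Rabs (a1 - b1) <= t1 - s1 ->
  Rabs b2 <= s2 -> Rabs (a2 - b2) <= t2 - s2 ->
  Rabs (a1 * a2 - b1 * b2) <= t1 * t2 - s1 * s2 /\ Rabs (b1 * b2) <= s1 * s2.
Proof.
move=> h1 h2 h3 h4.
have e : a1 * a2 - b1 * b2 = (a1 - b1) * a2 + b1 * (a2 - b2) by ring.
have ha2 : Rabs a2 <= t2.
  have : Rabs a2 <= Rabs b2 + Rabs (a2 - b2).
    have -> : a2 = b2 + (a2 - b2) by ring.
    have -> : b2 + (a2 - b2) - b2 = a2 - b2 by ring.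
    apply Rabs_triang.
  lra.
have p1 := Rabs_pos b1; have p2 := Rabs_pos (a2 - b2).
have p3 := Rabs_pos (a1 - b1); have p4 := Rabs_pos a2.
split; last by rewrite Rabs_mult; apply Rmult_le_compat; try lra; apply Rabs_pos.
rewrite e; apply: Rle_trans; first apply Rabs_triang.
rewrite !Rabs_mult.
have : Rabs (a1 - b1) * Rabs a2 <= (t1 - s1) * t2 by apply Rmult_le_compat.
have : Rabs b1 * Rabs (a2 - b2) <= s1 * (t2 - s2) by apply Rmult_le_compat.
lra.
Qed.

Lemma pow_perturb (a b U W : R) (m : nat) : 0 <= U -> 0 <= W ->
  Rabs b <= U -> Rabs (a - b) <= W ->
  Rabs (a ^ m - b ^ m) <= (U + W) ^ m - U ^ m /\ Rabs (b ^ m) <= U ^ m.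
Proof.
move=> hU hW hb hab; elim: m => [|m [IH1 IH2]] /=.
  rewrite Rminus_diag Rabs_R0 Rabs_R1; lra.
apply mul_perturb => //; lra.
Qed.

Lemma prod_perturb (I : Type) (r : list I) (e : I -> nat) (a b : I -> R) (U W : R) :
  0 <= U -> 0 <= W -> (forall i, Rabs (b i) <= U) -> (forall i, Rabs (a i - b i) <= W) ->
  Rabs (\big[Rmult/R1]_(i <- r) (a i ^ e i) - \big[Rmult/R1]_(i <- r) (b i ^ e i))
    <= (U + W) ^ (\big[addn/0%nat]_(i <- r) e i) - U ^ (\big[addn/0%nat]_(i <- r) e i)
  /\ Rabs (\big[Rmult/R1]_(i <- r) (b i ^ e i)) <= U ^ (\big[addn/0%nat]_(i <- r) e i).
Proof.
move=> hU hW hb hab; elim: r => [|i r [IH1 IH2]].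
  rewrite !big_nil /= Rminus_diag Rabs_R0 Rabs_R1; lra.
rewrite !big_cons !pow_add.
have [h1 h2] := pow_perturb (e i) hU hW (hb i) (hab i).
by apply mul_perturb.
Qed.

Lemma pow_succ_increment (U W : R) (m : nat) : 0 <= U -> 0 <= W ->
  (U + W) ^ (S m) - U ^ (S m) <= INR (S m) * W * (U + W) ^ m.
Proof.
move=> hU hW; elim: m => [|m IH]; first by rewrite /=; lra.
have h1 : U ^ S m <= (U + W) ^ S m by apply pow_incr; lra.
have e : (U + W) ^ S (S m) - U ^ S (S m) =
         (U + W) * ((U + W) ^ S m - U ^ S m) + W * U ^ S m by rewrite /=; ring.
rewrite e S_INR.
have h2 : (U + W) * ((U + W) ^ S m - U ^ S m) <= (U + W) * (INR (S m) * W * (U + W) ^ m).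
  apply Rmult_le_compat_l; lra.
have h3 : W * U ^ S m <= W * (U + W) ^ S m by apply Rmult_le_compat_l.
have -> : (INR (S m) + 1) * W * (U + W) ^ S m =
          (U + W) * (INR (S m) * W * (U + W) ^ m) + W * (U + W) ^ S m by rewrite /=; ring.
lra.
Qed.

Lemma pow_increment_le (U W : R) (k : nat) : 0 <= W <= U -> (1 <= k)%nat ->
  (U + W) ^ k - U ^ k <= INR k * W * (2 * U) ^ (k - 1).
Proof.
move=> hWU hk; have hk1 : k = S (k - 1) by lia.
have hd := pow_succ_increment (k - 1) (ltac:(lra) : 0 <= U) (ltac:(lra) : 0 <= W).
rewrite -hk1 in hd; apply: Rle_trans hd _.
apply Rmult_le_compat_l; first by apply Rmult_le_pos; [apply pos_INR | lra].
apply pow_incr; lra.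
Qed.

Definition absQ {n} (Q : mpoly n Z) : R := \big[Rplus/R0]_(m <- Q) Rabs (IZR m.1).

Lemma absQ_ge0 n (Q : mpoly n Z) : 0 <= absQ Q.
Proof.
rewrite /absQ; elim: Q => [|m Q IH]; rewrite ?big_nil ?big_cons; first lra.
have := Rabs_pos (IZR m.1); lra.
Qed.

Lemma evalR_perturb n k (Q : mpoly n Z) (x u : 'I_n -> R) (U W : R) :
  is_form k Q -> 0 <= U -> 0 <= W ->
  (forall i, Rabs (u i) <= U) -> (forall i, Rabs (x i - u i) <= W) ->
  Rabs (evalR Q x - evalR Q u) <= absQ Q * ((U + W) ^ k - U ^ k).
Proof.
move=> hf hU hW hu hx; rewrite /evalR /meval /absQ.
elim: Q hf => [|m Q IH]; first by rewrite !big_nil Rminus_diag Rabs_R0; lra.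
rewrite /is_form /= => /andP [/eqP hm hf]; rewrite !big_cons.
have [hmono _] := prod_perturb (index_enum (ordinal n)) (fun i => m.2 i) hU hW hu hx.
rewrite hm in hmono; have := IH hf.
set P1 := \big[Rmult/R1]_(i < n) _ in hmono *.
set P2 := \big[Rmult/R1]_(i < n) _ in hmono *.
set S1 := \big[Rplus/R0]_(j <- Q) _; set S2 := \big[Rplus/R0]_(j <- Q) _.
set S3 := \big[Rplus/R0]_(j <- Q) _ => hrest.
have -> : IZR m.1 * P1 + S1 - (IZR m.1 * P2 + S2) = IZR m.1 * (P1 - P2) + (S1 - S2) by ring.
apply: Rle_trans; first apply Rabs_triang.
rewrite Rabs_mult Rmult_plus_distr_r.
have : Rabs (IZR m.1) * Rabs (P1 - P2) <= Rabs (IZR m.1) * ((U + W) ^ k - U ^ k).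
  by apply Rmult_le_compat_l => //; apply Rabs_pos.
lra.
Qed.

Lemma prod_hom (I : Type) (r : list I) (e : I -> nat) (v : I -> R) (s : R) :
  \big[Rmult/R1]_(i <- r) ((s * v i) ^ e i) =
  s ^ (\big[addn/0%nat]_(i <- r) e i) * \big[Rmult/R1]_(i <- r) (v i ^ e i).
Proof.
elim: r => [|i r IH]; first by rewrite !big_nil /=; ring.
by rewrite !big_cons IH pow_add Rpow_mult_distr; ring.
Qed.

Lemma evalR_hom n k (Q : mpoly n Z) (v : 'I_n -> R) (s : R) :
  is_form k Q -> evalR Q (fun i => s * v i) = s ^ k * evalR Q v.
Proof.
rewrite /evalR /meval; elim: Q => [|m Q IH]; first by rewrite !big_nil => _; ring.
rewrite /is_form /= => /andP [/eqP hm hf].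
rewrite !big_cons IH // (prod_hom (index_enum (ordinal n)) (fun i => m.2 i) v s) hm.
by rewrite [in RHS]Rmult_plus_distr_l -!Rmult_assoc (Rmult_comm (IZR m.1)).
Qed.

Lemma evalR_IZR n (Q : mpoly n Z) (x : 'I_n -> Z) :
  evalR Q (fun i => IZR (x i)) = IZR (evalZ Q x).
Proof.
rewrite /evalR /evalZ /meval; elim: Q => [|m Q IH]; first by rewrite !big_nil.
rewrite !big_cons IH plus_IZR mult_IZR; congr (_ * _ + _).
elim: (index_enum _) => [|i r IH']; first by rewrite !big_nil.
by rewrite !big_cons IH' mult_IZR pow_IZR.
Qed.

Lemma Zdivide_mul_diff (q x1 x2 y1 y2 : Z) :
  Z.divide q (x1 - x2) -> Z.divide q (y1 - y2) -> Z.divide q (x1 * y1 - x2 * y2).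
Proof.
move=> [u1 e1] [u2 e2]; exists (u1 * y1 + x2 * u2)%Z.
have -> : (x1 * y1 - x2 * y2 = (x1 - x2) * y1 + x2 * (y1 - y2))%Z by ring.
rewrite e1 e2; ring.
Qed.

Lemma evalZ_cong n (Q : mpoly n Z) (x b : 'I_n -> Z) (q : Z) :
  (forall i, Z.divide q (x i - b i)) -> Z.divide q (evalZ Q x - evalZ Q b).
Proof.
move=> h; rewrite /evalZ /meval.
apply: (big_ind2 (fun a c => Z.divide q (a - c))) => [|x1 x2 y1 y2 [u1 e1] [u2 e2]|m _].
- by exists 0%Z; ring.
- by exists (u1 + u2)%Z; lia.
apply: Zdivide_mul_diff; first by exists 0%Z; ring.
apply: (big_ind2 (fun a c => Z.divide q (a - c))) => [|x1 x2 y1 y2|i _].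
- by exists 0%Z; ring.
- exact: Zdivide_mul_diff.
elim: (m.2 i) => [|e IH]; first by exists 0%Z.
rewrite Nat2Z.inj_succ !Z.pow_succ_r; try lia.
exact: Zdivide_mul_diff.
Qed.

Lemma filter_all_id (X : Type) (f : X -> bool) (S : list X) :
  (forall x, In x S -> f x = true) -> filter f S = S.
Proof.
elim: S => [|a S IH] h //=; rewrite h /=; last by left.
by rewrite IH // => x hx; apply h; right.
Qed.

Lemma filter_filter_len (X : Type) (f g : X -> bool) (S : list X) :
  (forall x, f x = true -> g x = true) ->
  length (filter f (filter g S)) = length (filter f S).
Proof.
move=> h; elim: S => [|a S IH] //=.
case eg: (g a) => /=; first by case: (f a) => /=; rewrite IH.
by case ef: (f a) => //=; rewrite (h _ ef) in eg.
Qed.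

Lemma pigeonhole_fiber (X : Type) (h : X -> nat) (M : nat) (l : list X) :
  (forall x, In x l -> (h x <= M)%coq_nat) ->
  exists j, (j <= M)%coq_nat /\
    (length l <= S M * length (filter (fun x => Nat.eqb (h x) j) l))%coq_nat.
Proof.
elim: M l => [|M IH] l hS.
  exists 0%nat; split => //.
  rewrite filter_all_id; first by simpl; lia.
  move=> x /hS hx; apply/Nat.eqb_eq; lia.
set f := fun x => Nat.eqb (h x) (S M).
have hl := filter_length f l.
case: (Nat.le_gt_cases (length l) (S (S M) * length (filter f l))) => hc.
  by exists (S M); split => //; lia.
have hS2 : forall x, In x (filter (fun x => ~~ f x) l) -> (h x <= M)%coq_nat.
  move=> x /filter_In [/hS hx hf]; rewrite /f in hf.
  case e: (Nat.eqb (h x) (S M)) hf => // _.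
  move/Nat.eqb_neq: e; lia.
have [j [hj hlen]] := IH _ hS2.
exists j; split; first lia.
rewrite filter_filter_len in hlen; last first.
  move=> x /Nat.eqb_eq hx; rewrite /f hx; apply/negP => /Nat.eqb_eq; lia.
nia.
Qed.

Lemma uniq_NoDup (T : eqType) (s : list T) : uniq s -> NoDup s.
Proof.
elim: s => [|a s IH] /=; first by constructor.
move=> /andP [ha hs]; constructor; last by apply IH.
move=> hin; move/negP: ha; apply.
elim: s hin {IH hs} => [|b s IH'] //= [->|h]; rewrite inE ?eqxx //.
by rewrite IH' ?orbT.
Qed.

Lemma size_length (T : Type) (s : list T) : size s = length s.
Proof. by elim: s => //= a s ->. Qed.

Lemma INR_expn (L n : nat) : INR (expn L n) = INR L ^ n.
Proof. by elim: n => [|n IH] //=; rewrite expnS mult_INR IH. Qed.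

Lemma Int_part_ge (m : Z) (y : R) : IZR m <= y -> (m <= Int_part y)%Z.
Proof.
move=> h; have [h1 h2] := base_Int_part y.
have : IZR m < IZR (Int_part y) + 1 by lra.
rewrite -plus_IZR => /lt_IZR; lia.
Qed.

Lemma floor_nat (z : R) : 2 <= z ->
  exists L : nat, (1 <= L)%nat /\ INR L <= z /\ z / 2 <= INR L.
Proof.
move=> hz; have [h1 h2] := base_Int_part z.
have hL : (1 <= Int_part z)%Z by apply Int_part_ge; simpl; lra.
exists (Z.to_nat (Int_part z)); rewrite INR_IZR_INZ Z2Nat.id; last lia.
split; [lia | lra].
Qed.

Lemma near_floor (y : R) (m w : Z) :
  (0 <= m - Int_part y < w)%Z -> Rabs (IZR m - y) <= IZR w.
Proof.
move=> hm; have [h1 h2] := base_Int_part y.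
have hw : IZR (m - Int_part y) + 1 <= IZR w by rewrite -plus_IZR; apply IZR_le; lia.
have h0 : 0 <= IZR (m - Int_part y) by apply IZR_le; lia.
rewrite minus_IZR in hw h0; apply Rabs_le; lra.
Qed.

Lemma residue_box (n L : nat) (q : Z) (b t : 'I_n -> Z) : (0 < q)%Z ->
  exists S : list ('I_n -> Z), NoDup S /\ length S = expn L n /\
    forall x, In x S -> forall i,
      ((x i - b i) mod q = 0)%Z /\ (0 <= x i - t i < q * Z.of_nat L)%Z.
Proof.
move=> hq.
pose F (j : {ffun 'I_n -> 'I_L}) i := (t i + (b i - t i) mod q + q * Z.of_nat (j i))%Z.
exists (map F (enum {ffun 'I_n -> 'I_L})); split; [|split].
- apply NoDup_map_NoDup_ForallPairs; last by apply uniq_NoDup; exact: enum_uniq.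
  move=> j1 j2 _ _ e; apply/ffunP => i; apply val_inj.
  have /= e' := f_equal (fun f => f i) e; rewrite /F in e'.
  apply Nat2Z.inj; apply (Z.mul_reg_l _ _ q); lia.
- by rewrite length_map -size_length -cardE card_ffun !card_ord.
move=> x /in_map_iff [j [<- _]] i; rewrite /F.
have hr := Z.mod_pos_bound (b i - t i) q hq.
have hj : (Z.of_nat (j i) + 1 <= Z.of_nat L)%Z by have := ltn_ord (j i); lia.
split; last nia.
have e := Z.div_mod (b i - t i) q ltac:(lia).
have -> : (t i + (b i - t i) mod q + q * Z.of_nat (j i) - b i =
           (Z.of_nat (j i) - (b i - t i) / q) * q)%Z by lia.
by apply Z.mod_mul; lia.
Qed.

Lemma residue_pigeonhole (X : Type) (g : X -> Z) (xs : list X) (a q lo hi : Z) :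
  (0 < q)%Z -> xs <> nil ->
  (forall x, In x xs -> (lo <= g x <= hi)%Z /\ ((g x - a) mod q = 0)%Z) ->
  exists x0, In x0 xs /\
    INR (length xs) <= (IZR (hi - lo) / IZR q + 2) *
                      INR (length (filter (fun x => Z.eqb (g x) (g x0)) xs)).
Proof.
move=> hq hxs hg.
have hlohi : (lo <= hi)%Z by case: xs hxs hg => // y ys _ /(_ y (or_introl erefl)); lia.
(* [z0] is the largest integer below [lo] congruent to [a] modulo [q]. *)
set z0 := (lo - q + (a - lo + q) mod q)%Z.
have hz0 := Z.mod_pos_bound (a - lo + q) q hq.
set h := fun x => Z.to_nat ((g x - z0) / q).
have hgh : forall x, In x xs -> g x = (z0 + q * Z.of_nat (h x))%Z.
  move=> x /hg [hb /(Z.mod_divide (g x - a) q ltac:(lia)) [u hu]].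
  have e := Z.div_mod (a - lo + q) q ltac:(lia).
  rewrite /h; have -> : (g x - z0 = (u + (a - lo + q) / q) * q)%Z by rewrite /z0; lia.
  rewrite Z.div_mul ?Z2Nat.id; nia.
set M := Z.to_nat ((hi - z0) / q).
have hM : forall x, In x xs -> (h x <= M)%coq_nat.
  move=> x hx; have [hb _] := hg x hx.
  apply Z2Nat.inj_le; try (apply Z.div_pos; lia); apply Z.div_le_mono; lia.
have [j [_ hlen]] := pigeonhole_fiber hM.
case e: (filter (fun x => Nat.eqb (h x) j) xs) hlen => [|x0 l] hlen.
  by case: xs hxs {hg hgh hM e} hlen => //= y ys _; lia.
have /filter_In [hx0 /Nat.eqb_eq hj] : In x0 (filter (fun x => Nat.eqb (h x) j) xs).
  by rewrite e; left.
exists x0; split => //.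
have <- : filter (fun x => Nat.eqb (h x) j) xs = filter (fun x => Z.eqb (g x) (g x0)) xs.
  apply filter_ext_in => x hx; rewrite (hgh x hx) (hgh x0 hx0) hj.
  case: Nat.eqb_spec => ex; case: Z.eqb_spec => ez //; first by rewrite ex in ez.
  by case: ex; apply Nat2Z.inj; apply (Z.mul_reg_l _ _ q); lia.
rewrite e.
have hMR : INR (S M) <= IZR (hi - lo) / IZR q + 2.
  have hdiv : IZR q * IZR ((hi - z0) / q) <= IZR (hi - lo) + IZR q.
    by rewrite -mult_IZR -plus_IZR; apply IZR_le; have := Z.mul_div_le (hi - z0) q hq; lia.
  have hq0 : 0 < IZR q by apply IZR_lt.
  rewrite S_INR /M INR_IZR_INZ Z2Nat.id; last by apply Z.div_pos; lia.
  have -> : IZR (hi - lo) / IZR q + 2 = (IZR (hi - lo) + IZR q) / IZR q + 1 by field; lra.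
  apply Rplus_le_compat_r; apply (Rmult_le_reg_l (IZR q)) => //.
  by rewrite /Rdiv -Rmult_assoc Rinv_r_simpl_m; lra.
apply: Rle_trans; first by apply le_INR; exact hlen.
rewrite mult_INR; apply Rmult_le_compat_r => //; apply pos_INR.
Qed.

(* Points of [xs] congruent to [b] modulo [q] on which [Q] takes values in
   [[9R/8, 15R/8]] meet at most [4R/q] levels, so one level [Q x0] carries at
   least a proportion [q/(4R)] of them. *)
Lemma popular_level n (Q : mpoly n Z) (q : Z) (b : 'I_n -> Z) (R : R)
    (xs : list ('I_n -> Z)) :
  (1 <= q)%Z -> IZR q + 1 < R -> xs <> nil ->
  (forall x, In x xs -> 9 / 8 * R <= IZR (evalZ Q x) <= 15 / 8 * R /\
                        forall i, ((x i - b i) mod q = 0)%Z) ->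
  exists x0, In x0 xs /\
    INR (length xs) * (IZR q / (4 * R))
      <= INR (length (filter (fun x => Z.eqb (evalZ Q x) (evalZ Q x0)) xs)).
Proof.
move=> hq hRq hxs0 hxs; have hqR : 1 <= IZR q by apply (IZR_le 1).
have [h1 h2] := base_Int_part R; have [h3 h4] := base_Int_part (2 * R).
have hrange : forall x, In x xs ->
    (Int_part R <= evalZ Q x <= Int_part (2 * R))%Z /\ ((evalZ Q x - evalZ Q b) mod q = 0)%Z.
  move=> x /hxs [hval hcong]; split; first split.
  - by apply le_IZR; lra.
  - by apply Int_part_ge; lra.
  apply Z.mod_divide; first lia.
  by apply evalZ_cong => i; apply Z.mod_divide; [lia | exact: hcong].
have [x0 [hx0 hfib]] := residue_pigeonhole (ltac:(lia) : (0 < q)%Z) hxs0 hrange.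
exists x0; split => //.
set N := INR (length (filter _ xs)) in hfib *.
have hN : 0 <= N by apply pos_INR.
have hspread : IZR (Int_part (2 * R) - Int_part R) / IZR q + 2 <= 4 * R / IZR q.
  have -> : IZR (Int_part (2 * R) - Int_part R) / IZR q + 2 =
            (IZR (Int_part (2 * R) - Int_part R) + 2 * IZR q) / IZR q by field; lra.
  rewrite minus_IZR /Rdiv; apply Rmult_le_compat_r; last lra.
  by left; apply Rinv_0_lt_compat; lra.
have hfib' := Rle_trans _ _ _ hfib (Rmult_le_compat_r N _ _ hN hspread).
have -> : N = 4 * R / IZR q * N * (IZR q / (4 * R)) by field; lra.
by apply Rmult_le_compat_r; [apply Rlt_le, Rdiv_lt_0_compat; lra | lra].
Qed.

Lemma root_pow (y : R) (k : nat) : 0 < y -> (1 <= k)%nat -> Rpower y (/ INR k) ^ k = y.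
Proof.
move=> hy hk; have hk0 : 0 < INR k by apply (lt_INR 0); lia.
rewrite -Rpower_pow; last exact: exp_pos.
by rewrite Rpower_mult Rinv_l ?Rpower_1 //; lra.
Qed.

Lemma root_ge (s y : R) (k : nat) :
  0 < s -> s ^ k <= y -> (1 <= k)%nat -> s <= Rpower y (/ INR k).
Proof.
move=> hs hsy hk; have hk0 : 0 < INR k by apply (lt_INR 0); lia.
have := Rle_Rpower_l _ _ (/ INR k) (Rlt_le _ _ (Rinv_0_lt_compat _ hk0)) (conj (pow_lt _ k hs) hsy).
by rewrite -Rpower_pow // Rpower_mult Rinv_r ?Rpower_1 //; lra.
Qed.

Definition exponent (n k : nat) : R := INR n / INR k.

Lemma exponent_ge1 (n k : nat) : (1 <= k)%nat -> (k <= n)%nat -> 1 <= exponent n k.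
Proof.
move=> hk hkn; have hk0 : 0 < INR k by apply (lt_INR 0); lia.
rewrite /exponent; apply (Rmult_le_reg_r (INR k)) => //.
rewrite /Rdiv Rmult_assoc Rinv_l ?Rmult_1_l ?Rmult_1_r; last lra.
by apply le_INR; lia.
Qed.

Definition unit_vec (n : nat) (i0 : 'I_n) : 'I_n -> R :=
  fun i => if i == i0 then 1 else 0.

Section LevelSetCount.

Variables (n k : nat) (Q : mpoly n Z) (i0 : 'I_n).
Hypotheses (hk : (1 <= k)%nat) (hform : is_form k Q)
           (hpos : 0 < evalR Q (unit_vec i0)).

Local Notation c := (evalR Q (unit_vec i0)).

(* Ratio [T / W] between the size [T] of the base point and the side [W] of
   the box below which [Q] varies by at most a quarter of its value. *)
Definition blowup : R := 4 * absQ Q * INR k * 2 ^ (k - 1) / c + 1.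

(* Heights [R] beyond which boxes of modulus [q] fit under the level [R]. *)
Definition threshold (q : R) : R := c * (2 * q * blowup) ^ k + q + 1.

(* The constant in the final lower bound, before comparing [lam] with [R]. *)
Definition count_const : R :=
  Rpower (3 / (2 * c)) (exponent n k) / (4 * (2 * blowup) ^ n).

Lemma blowup_ge1 : 1 <= blowup.
Proof.
have hA := absQ_ge0 Q; have hkR := pos_INR k; have h2 := pow_le 2 (k - 1) ltac:(lra).
have : 0 <= 4 * absQ Q * INR k * 2 ^ (k - 1) / c.
  by apply Rle_mult_inv_pos => //; repeat apply Rmult_le_pos => //; lra.
rewrite /blowup; lra.
Qed.

Lemma blowup_spec : 4 * absQ Q * INR k * 2 ^ (k - 1) <= c * blowup.
Proof.
have -> : c * blowup = 4 * absQ Q * INR k * 2 ^ (k - 1) + c by rewrite /blowup; field; lra.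
lra.
Qed.

Lemma threshold_ge (q : R) : 0 <= q -> q + 1 <= threshold q.
Proof.
move=> hq; have hK := blowup_ge1.
have : 0 <= c * (2 * q * blowup) ^ k by apply Rmult_le_pos; [lra | apply pow_le; nra].
rewrite /threshold; lra.
Qed.

Lemma count_const_pos : 0 < count_const.
Proof.
have hK := blowup_ge1.
apply Rdiv_lt_0_compat; first exact: exp_pos.
by apply Rmult_lt_0_compat; [lra | apply pow_lt; lra].
Qed.

Lemma scale_exists (q R : R) : 1 <= q -> threshold q < R ->
  exists T, 0 < T /\ c * T ^ k = 3 * R / 2 /\ 2 * q * blowup <= T /\
    T ^ n = Rpower (3 / (2 * c)) (exponent n k) * Rpower R (exponent n k).
Proof.
move=> hq hR; have hK := blowup_ge1.
have hpow0 : 0 <= c * (2 * q * blowup) ^ k by apply Rmult_le_pos; [lra | apply pow_le; nra].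
have hR0 : 0 < R by rewrite /threshold in hR; lra.
have hX : 0 < 3 * R / (2 * c) by apply Rdiv_lt_0_compat; lra.
exists (Rpower (3 * R / (2 * c)) (/ INR k)); split; first exact: exp_pos.
split; first by rewrite root_pow //; field; lra.
split.
  apply root_ge => //; first nra.
  apply (Rmult_le_reg_l c) => //.
  have -> : c * (3 * R / (2 * c)) = 3 * R / 2 by field; lra.
  rewrite /threshold in hR; lra.
rewrite -Rpower_pow; last exact: exp_pos.
rewrite Rpower_mult Rpower_mult_distr; [|apply Rdiv_lt_0_compat; lra | lra].
rewrite /exponent; congr Rpower; [field; lra | by rewrite /Rdiv Rmult_comm].
Qed.

Lemma box_values (T W : R) (x : 'I_n -> Z) : 0 < T -> 1 <= W -> W * blowup <= T ->
  (forall i, Rabs (IZR (x i) - T * unit_vec i0 i) <= W) ->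
  Rabs (IZR (evalZ Q x) - c * T ^ k) <= c * T ^ k / 4.
Proof.
move=> hT hW hWK hx; have hK := blowup_ge1.
have hWT : W <= T by nra.
have hu : forall i, Rabs (T * unit_vec i0 i) <= T.
  by move=> i; rewrite /unit_vec; case: (i == i0); rewrite Rabs_pos_eq; lra.
have herr := evalR_perturb hform (Rlt_le _ _ hT) (ltac:(lra) : 0 <= W) hu hx.
rewrite evalR_IZR (evalR_hom _ _ hform) (Rmult_comm (T ^ k)) in herr.
apply: Rle_trans herr _.
have hinc := pow_increment_le (conj (ltac:(lra) : 0 <= W) hWT) hk.
rewrite Rpow_mult_distr in hinc.
have hA := absQ_ge0 Q.
set P := T ^ (k - 1) in hinc *.
have hP : 0 < P by apply pow_lt.
have hTk : T ^ k = T * P by rewrite /P tech_pow_Rmult; congr (_ ^ _); lia.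
have h1 : absQ Q * ((T + W) ^ k - T ^ k) <= absQ Q * INR k * 2 ^ (k - 1) * (W * P).
  have -> : absQ Q * INR k * 2 ^ (k - 1) * (W * P) = absQ Q * (INR k * W * (2 ^ (k - 1) * P)) by ring.
  by apply Rmult_le_compat_l.
have h2 : absQ Q * INR k * 2 ^ (k - 1) * (W * P) <= c * blowup / 4 * (W * P).
  apply Rmult_le_compat_r; first nra.
  have := blowup_spec; lra.
have h3 : c * blowup / 4 * (W * P) <= c / 4 * P * T.
  have -> : c * blowup / 4 * (W * P) = c / 4 * P * (W * blowup) by field.
  by apply Rmult_le_compat_l => //; apply Rmult_le_pos; lra.
rewrite hTk in h1 *; lra.
Qed.

Lemma points_near_level (q : Z) (b : 'I_n -> Z) (R : R) :
  (1 <= q)%Z -> threshold (IZR q) < R ->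
  exists xs : list ('I_n -> Z), NoDup xs /\
    (forall x, In x xs -> 9 / 8 * R <= IZR (evalZ Q x) <= 15 / 8 * R /\
                          forall i, ((x i - b i) mod q = 0)%Z) /\
    Rpower (3 / (2 * c)) (exponent n k) * Rpower R (exponent n k) /
      ((2 * blowup) ^ n * IZR q ^ n) <= INR (length xs).
Proof.
move=> hq hR; have hqR : 1 <= IZR q by apply (IZR_le 1).
have hK := blowup_ge1.
have [T [hT0 [hTk [hTq hTn]]]] := scale_exists hqR hR.
have hKq : 0 < blowup * IZR q by nra.
have hz : 2 <= T / (blowup * IZR q).
  apply (Rmult_le_reg_r (blowup * IZR q)) => //.
  by rewrite /Rdiv Rmult_assoc Rinv_l; lra.
have [L [hL1 [hLz hLz']]] := floor_nat hz.
have hLR : 1 <= INR L by apply (le_INR 1); lia.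
have hWK : IZR q * INR L * blowup <= T.
  have -> : T = T / (blowup * IZR q) * (blowup * IZR q) by field; lra.
  have -> : IZR q * INR L * blowup = INR L * (blowup * IZR q) by ring.
  by apply Rmult_le_compat_r; lra.
have hW1 : 1 <= IZR q * INR L by nra.
have [xs [hND [hlen hbox]]] :=
  residue_box L b (fun i => Int_part (T * unit_vec i0 i)) (ltac:(lia) : (0 < q)%Z).
exists xs; split => //; split.
  move=> x hx; split; last by move=> i; case: (hbox x hx i).
  have hdist : forall i, Rabs (IZR (x i) - T * unit_vec i0 i) <= IZR q * INR L.
    move=> i; have [_ hi] := hbox x hx i.
    by have := near_floor hi; rewrite mult_IZR -INR_IZR_INZ.
  have hb := box_values hT0 hW1 hWK hdist; rewrite hTk in hb.
  have h1 := Rle_abs (IZR (evalZ Q x) - 3 * R / 2).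
  have h2 := Rle_abs (- (IZR (evalZ Q x) - 3 * R / 2)); rewrite Rabs_Ropp in h2.
  lra.
rewrite hlen INR_expn -hTn.
have -> : T ^ n / ((2 * blowup) ^ n * IZR q ^ n) = (T / (2 * blowup * IZR q)) ^ n.
  by rewrite /Rdiv (Rpow_mult_distr T) pow_inv !Rpow_mult_distr.
apply pow_incr; split; first by apply Rlt_le, Rdiv_lt_0_compat; lra.
have -> : T / (2 * blowup * IZR q) = T / (blowup * IZR q) / 2 by field; lra.
exact: hLz'.
Qed.

Lemma local_count (q : Z) (b : 'I_n -> Z) (R : R) :
  (1 <= q)%Z -> threshold (IZR q) < R ->
  exists lam : Z, R <= IZR lam < 2 * R /\
  exists l : list ('I_n -> Z), NoDup l /\
    (forall x, In x l -> evalZ Q x = lam /\ forall i, ((x i - b i) mod q = 0)%Z) /\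
    count_const * Rpower R (exponent n k - 1) / IZR q ^ (n - 1) <= INR (length l).
Proof.
move=> hq hR; have hqR : 1 <= IZR q by apply (IZR_le 1).
have hK := blowup_ge1.
have hRq := threshold_ge (ltac:(lra) : 0 <= IZR q); have hR0 : 0 < R by lra.
have [xs [hND [hxs hcount]]] := points_near_level b hq hR.
set P := Rpower (3 / (2 * c)) (exponent n k) in hcount *.
set K2 := (2 * blowup) ^ n in hcount *.
have hP : 0 < P by apply exp_pos.
have hK2 : 0 < K2 by apply pow_lt; lra.
have hqn0 : 0 < IZR q ^ n by apply pow_lt; lra.
have hxs0 : xs <> nil.
  move=> e; rewrite e /= in hcount; suff : 0 < P * Rpower R (exponent n k) / (K2 * IZR q ^ n) by lra.
  by apply Rdiv_lt_0_compat; [apply Rmult_lt_0_compat => //; apply exp_pos | nra].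
have [x0 [hx0 hlevels]] := popular_level hq (ltac:(lra) : IZR q + 1 < R) hxs0 hxs.
exists (evalZ Q x0); split; first by have [? _] := hxs x0 hx0; lra.
exists (filter (fun x => Z.eqb (evalZ Q x) (evalZ Q x0)) xs); split; first exact: NoDup_filter.
split; first by move=> x /filter_In [hx /Z.eqb_eq ->]; split => //; case: (hxs x hx).
have hRa : Rpower R (exponent n k) = Rpower R (exponent n k - 1) * R.
  by rewrite -[X in _ = _ * X](Rpower_1 _ hR0) -Rpower_plus; congr Rpower; ring.
have hqn : IZR q ^ n = IZR q ^ (n - 1) * IZR q.
  by rewrite Rmult_comm tech_pow_Rmult; congr (_ ^ _); have := ltn_ord i0; lia.
apply: Rle_trans hlevels.
apply: Rle_trans (Rmult_le_compat_r _ _ _ _ hcount); last first.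
  by apply Rlt_le, Rdiv_lt_0_compat; lra.
rewrite /count_const -/P -/K2 hRa hqn; apply Req_le; field.
by repeat split; try lra; apply pow_nonzero; lra.
Qed.

End LevelSetCount.

(* The Birch rank is at most [n], so the hypothesis [B(Q) > (k-1) 2^k] forces
   more variables than the degree; this is all the argument needs from it. *)
Lemma birch_rank_bound (n k : nat) (Q : mpoly n Z) : leq 2 k ->
  (exists r, birch_rank Q r /\ leq (muln (subn k 1) (expn 2 k)).+1 r) -> (k < n)%nat.
Proof.
move=> hk [r [[d [_ ->]] hrk]].
have h2k : leq k.+1 (expn 2 k) by apply: ltn_expl.
move: h2k hrk; set X := expn 2 k => h2k hrk; nia.
Qed.

(* Passing from the level [lam] in [[R, 2R)] and the modulus [q = p^J] to the
   normalisation [p^(-J(n-1)) lam^(n/k - 1)] of the theorem costs [2^(a-1)]. *)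
Lemma prime_power_weight (kap a R lam : R) (p J n : nat) :
  0 < kap -> 1 <= a -> 0 < R -> R <= lam < 2 * R -> (1 <= p)%nat -> (1 <= n)%nat ->
  kap / Rpower 2 (a - 1) *
    (Rpower (INR p) (- (INR J * (INR n - 1))) * Rpower lam (a - 1))
  <= kap * Rpower R (a - 1) / IZR (Z.of_nat p ^ Z.of_nat J) ^ (n - 1).
Proof.
move=> hkap ha hR hlam hp hn.
have hp0 : 0 < INR p by apply (lt_INR 0); lia.
have hweight : Rpower (INR p) (- (INR J * (INR n - 1))) =
               / IZR (Z.of_nat p ^ Z.of_nat J) ^ (n - 1).
  rewrite Rpower_Ropp -(minus_INR n 1); last lia.
  by rewrite -mult_INR Rpower_pow // pow_mult -pow_IZR -INR_IZR_INZ.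
have hlam2 : Rpower lam (a - 1) <= Rpower 2 (a - 1) * Rpower R (a - 1).
  rewrite Rpower_mult_distr; try lra.
  by apply Rle_Rpower_l; lra.
have h2 : 0 < Rpower 2 (a - 1) by apply exp_pos.
have hq : 0 < IZR (Z.of_nat p ^ Z.of_nat J) ^ (n - 1).
  by apply pow_lt, (IZR_lt 0), Z.pow_pos_nonneg; lia.
rewrite hweight -Rmult_assoc.
set qn := IZR (Z.of_nat p ^ Z.of_nat J) ^ (n - 1) in hq *.
apply: (Rle_trans _ (kap / Rpower 2 (a - 1) * / qn * (Rpower 2 (a - 1) * Rpower R (a - 1)))).
  apply Rmult_le_compat_l => //.
  by apply Rmult_le_pos; apply Rlt_le; [apply Rdiv_lt_0_compat | apply Rinv_0_lt_compat].
by apply Req_le; field; lra.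
Qed.

Theorem mainTheorem3 (n k : nat) (Q : mpoly n Z) :
  leq 2 k -> is_form k Q -> pos_def Q ->
  (exists r, birch_rank Q r /\ leq (muln (subn k 1) (expn 2 k)).+1 r) ->
  exists C : R, Rlt R0 C /\
  forall p : nat, prime p -> forall J : nat,
  exists R0' : R, Rlt R0 R0' /\
  forall (b : 'I_n -> Z) (Rr : R), Rlt R0' Rr ->
  exists lam : Z, Rle Rr (IZR lam) /\ Rlt (IZR lam) (Rmult 2 Rr) /\
    exists l : list ('I_n -> Z), NoDup l /\
      (forall x, In x l ->
         evalZ Q x = lam /\
         forall i : 'I_n, Z.modulo (Z.sub (x i) (b i)) (Z.pow (Z.of_nat p) (Z.of_nat J)) = 0%Z) /\
      Rle (Rmult C (Rmult (Rpower (INR p) (Ropp (Rmult (INR J) (Rminus (INR n) 1))))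
                          (Rpower (IZR lam) (Rminus (Rdiv (INR n) (INR k)) 1))))
          (INR (length l)).
Proof.
move=> hk2 hform hpd hrank.
have hkn := birch_rank_bound hk2 hrank.
have hk : (1 <= k)%nat by lia.
have hn : (0 < n)%nat by lia.
set i0 : 'I_n := Ordinal hn.
have hc : 0 < evalR Q (unit_vec i0) by apply: hpd; exists i0; rewrite /unit_vec eqxx; lra.
have hkap := count_const_pos k hc.
have ha := exponent_ge1 hk (ltnW hkn).
exists (count_const k Q i0 / Rpower 2 (exponent n k - 1)).
split; first by apply Rdiv_lt_0_compat => //; apply exp_pos.
move=> p hp J; have hp1 : (1 <= p)%nat by have := prime_gt1 hp; lia.
set q := (Z.of_nat p ^ Z.of_nat J)%Z.
have hq : (1 <= q)%Z by rewrite /q; have := Z.pow_pos_nonneg (Z.of_nat p) (Z.of_nat J); lia.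
have hq0 : 0 <= IZR q by apply (IZR_le 0); lia.
exists (threshold k Q i0 (IZR q)); split; first by have := threshold_ge k hc hq0; lra.
move=> b R hR; have hR0 : 0 < R by have := threshold_ge k hc hq0; lra.
have [lam [hlam [l [hND [hl hcount]]]]] := local_count hk hform hc b hq hR.
exists lam; split; [lra | split; [lra | exists l; do 2 split => //]].
apply: Rle_trans hcount.
exact: prime_power_weight.
Qed.
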